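(* Let $\mathbf U$ be a group variety. Every finite connected directed graph $\Gamma$ which is minimal, in the minor ordering among finite connected directed graphs, with respect to not having property $\mathrm{P}(\mathbf U)$ (that is, $\Gamma$ does not have $\mathrm{P}(\mathbf U)$, and every connected minor $\Delta$ of $\Gamma$ that does not have $\mathrm{P}(\mathbf U)$ has $\Gamma$ as a minor) is two-edge-connected and has no loops.
   Context: All graphs are finite directed graphs, possibly with loops and multiple edges. A graph $\Gamma$ has vertex set $V(\Gamma)$ and edge set $E(\Gamma)$, and each edge $e$ has an initial vertex $\iota e$ and a terminal vertex $\tau e$; a loop is an edge with $\iota e=\tau e$. A subgraph is regarded as a set of vertices and edges (containing the endpoints of its edges); unions and intersections of subgraphs are taken as sets of vertices and edges. Connectedness and two-edge-connectedness refer to the underlying undirected multigraph (two-edge-connected: connected and remains connected after removing any one edge). Let $\overline{\Gamma}$ be the graph with vertex set $V(\Gamma)$ and edge set $E(\Gamma)\sqcup E(\Gamma)^{-1}$, where for $e\in E(\Gamma)$ the formal edge $e^{-1}$ goes from $\tau e$ to $\iota e$. A path $p$ in $\overline{\Gamma}$ is either an empty path at a vertex or a sequence $e_1\cdots e_n$ of edges of $\overline{\Gamma}$ with $\tau e_i=\iota e_{i+1}$; it has initial vertex $\iota p$ and terminal vertex $\tau p$, and is regarded as a word over the alphabet $E(\Gamma)\cup E(\Gamma)^{-1}$. The span $\langle p\rangle$ is the subgraph of $\Gamma$ consisting of the vertices traversed by $p$ and the edges $e\in E(\Gamma)$ such that $e$ or $e^{-1}$ occurs in $p$. For a group variety $\mathbf{U}$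 and words $u,v$ over $X\cup X^{-1}$, write $u\equiv_{\mathbf U} v$ if $u$ and $v$ represent the same element of the relatively free group of $\mathbf U$ on $X$ (i.e. the identity $u=v$ holds in $\mathbf U$), and $[u]_{\mathbf U}$ for the class of $u$. The free $g\mathbf U$-category on $\Gamma$ has vertex set $V(\Gamma)$; its arrows from $i$ to $j$ are the triples $(i,[p]_{\mathbf U},j)$ with $p$ an $(i,j)$-path in $\overline\Gamma$, and $(i,[p]_{\mathbf U},j)(j,[q]_{\mathbf U},k)=(i,[pq]_{\mathbf U},k)$; for an arrow $x=(i,[p]_{\mathbf U},j)$ put $\iota x=i$, $\tau x=j$. For each arrow $x$ define subgraphs of $\Gamma$: $C_0(x)=\bigcap\{\langle p\rangle : p \text{ a path in }\overline\Gamma \text{ with } (\iota p,[p]_{\mathbf U},\tau p)=x\}$; $P_n(x)$ is the connected component of $C_n(x)$ containing $\iota x$; $C_{n+1}(x)=\bigcap\{P_n(x_1)\cup\cdots\cup P_n(x_k) : k\ge 1,\ x_1,\dots,x_k \text{ arrows with } x_1\cdots x_k=x\}$; and $P(x)=\bigcap_{n\ge 0}P_n(x)$. A connected graph $\Gamma$ has property $\mathrm{P}(\mathbf U)$ if $\tau x\in P(x)$ for every arrow $x$ of the free $g\mathbf U$-category on $\Gamma$. A graph $\Delta$ is a minor of $\Gamma$ if $\Delta$ can be obtained from $\Gamma$ by a finite sequence of the following operations: contracting an edge $e$ with $\iota e\neq\tau e$ (removing $e$ and identifying its two endpoints into one vertex), deleting an edge, deleting a vertex together with its incident edges, and reversing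 the direction of an edge. *)

From Stdlib Require Import Relations.
From Stdlib Require List.
From mathcomp Require Import all_boot.

Set Implicit Arguments.
Unset Strict Implicit.
Unset Printing Implicit Defensive.

Record group := Group {
  gcar :> Type;
  gmul : gcar -> gcar -> gcar;
  ginv : gcar -> gcar;
  gone : gcar;
  gmulA : forall x y z, gmul x (gmul y z) = gmul (gmul x y) z;
  gmul1 : forall x, gmul gone x = x;
  gmulV : forall x, gmul (ginv x) x = gone
}.

(* A word over X \cup X^{-1}: a letter (x, true) is x, (x, false) is x^{-1}. *)
Definition word (X : Type) := seq (X * bool)%type.

Definition geval (X : Type) (G : group) (f : X -> G) (w : word X) : G :=
  foldr (fun a acc => gmul (if a.2 then f a.1 else ginv (f a.1)) acc) (gone G) w.

(* A group variety, given by a set of defining laws (identities) in the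
   countably many variables x_0, x_1, ... (Birkhoff). *)
Definition law := (word nat * word nat)%type.
Definition variety := law -> Prop.

Definition in_variety (U : variety) (G : group) : Prop :=
  forall l, U l -> forall f : nat -> G, geval f l.1 = geval f l.2.

(* u ==_U v : the identity u = v holds in U, i.e. u and v represent the same
   element of the relatively free group of U on X. *)
Definition wequiv (U : variety) (X : Type) (u v : word X) : Prop :=
  forall G : group, in_variety U G -> forall f : X -> G, geval f u = geval f v.

Record graph := Graph {
  gV : finType;
  gE : finType;
  gsrc : gE -> gV;
  gtgt : gE -> gV
}.

Section GraphNotions.
Variable g : graph.
Local Notation V := (gV g).
Local Notation E := (gE g).

Definition adj_in (P : pred E) : rel V :=
  fun x y => [exists e, P e &&
     (((gsrc e == x) && (gtgt e == y)) || ((gsrc e == y) && (gtgt e == x)))].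

Definition connected : Prop :=
  (0 < #|V|) /\ forall x y : V, connect (adj_in predT) x y.

Definition two_edge_connected : Prop :=
  connected /\ forall (e : E) (x y : V), connect (adj_in (predC1 e)) x y.

Definition loopless : Prop := forall e : E, gsrc e <> gtgt e.

Definition lsrc (a : E * bool) : V := if a.2 then gsrc a.1 else gtgt a.1.
Definition ltgt (a : E * bool) : V := if a.2 then gtgt a.1 else gsrc a.1.

Fixpoint is_path (i : V) (w : word E) (j : V) : Prop :=
  match w with
  | [::] => i = j
  | a :: w' => lsrc a = i /\ is_path (ltgt a) w' j
  end.

Definition subgraph := ((V -> Prop) * (E -> Prop))%type.

Definition span (i : V) (w : word E) : subgraph :=
  (fun v => v = i \/ exists a, List.In a w /\ (v = lsrc a \/ v = ltgt a),
   fun e => exists b, List.In (e, b) w).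

Definition reach (P : E -> Prop) : relation V :=
  clos_refl_trans V (fun x y => exists e, P e /\
     ((gsrc e = x /\ gtgt e = y) \/ (gsrc e = y /\ gtgt e = x))).

Definition component (C : subgraph) (i : V) : subgraph :=
  (fun v => C.1 i /\ reach C.2 i v,
   fun e => C.2 e /\ C.1 i /\ reach C.2 i (gsrc e)).

Variable U : variety.

(* An arrow of the free gU-category is (i, [w]_U, j) with w a path from i to
   j; we represent it by a triple (i, w, j).  Two triples give the same arrow
   iff they have equal endpoints and U-equivalent words. *)
Definition arrow := (V * word E * V)%type.

(* fs = [:: x_1; ...; x_k] (k >= 1) is a factorisation of the arrow (i,[w],j):
   the x_m are arrows, composable, and x_1 ... x_k = (i,[w],j). *)
Fixpoint chain (i : V) (fs : seq arrow) (j : V) : Prop :=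
  match fs with
  | [::] => i = j
  | x :: fs' => x.1.1 = i /\ is_path x.1.1 x.1.2 x.2 /\ chain x.2 fs' j
  end.

Definition factorisation (i : V) (w : word E) (j : V) (fs : seq arrow) : Prop :=
  fs <> [::] /\ chain i fs j /\ wequiv U (flatten (map (fun x => x.1.2) fs)) w.

Definition C0 (i : V) (w : word E) (j : V) : subgraph :=
  (fun v => forall w', is_path i w' j -> wequiv U w' w -> (span i w').1 v,
   fun e => forall w', is_path i w' j -> wequiv U w' w -> (span i w').2 e).

Fixpoint Cn (n : nat) (i : V) (w : word E) (j : V) : subgraph :=
  match n with
  | 0 => C0 i w j
  | n'.+1 =>
    (fun v => forall fs, factorisation i w j fs ->
        exists x, List.In x fs /\ (component (Cn n' x.1.1 x.1.2 x.2) x.1.1).1 v,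
     fun e => forall fs, factorisation i w j fs ->
        exists x, List.In x fs /\ (component (Cn n' x.1.1 x.1.2 x.2) x.1.1).2 e)
  end.

Definition Pn (n : nat) (i : V) (w : word E) (j : V) : subgraph :=
  component (Cn n i w j) i.

Definition Pinf (i : V) (w : word E) (j : V) : subgraph :=
  (fun v => forall n, (Pn n i w j).1 v, fun e => forall n, (Pn n i w j).2 e).

Definition propP : Prop :=
  forall (i j : V) (w : word E), is_path i w j -> (Pinf i w j).1 j.

End GraphNotions.

Definition iso_step (g D : graph) : Prop :=
  exists (phi : gV g -> gV D) (psi : gE D -> gE g),
    bijective phi /\ bijective psi /\
    forall d, phi (gsrc (psi d)) = gsrc d /\ phi (gtgt (psi d)) = gtgt d.

Definition del_edge_step (g D : graph) : Prop :=
  exists (e : gE g) (phi : gV g -> gV D) (psi : gE D -> gE g),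
    bijective phi /\ injective psi /\
    (forall d, psi d <> e) /\ (forall e', e' <> e -> exists d, psi d = e') /\
    forall d, phi (gsrc (psi d)) = gsrc d /\ phi (gtgt (psi d)) = gtgt d.

Definition del_vertex_step (g D : graph) : Prop :=
  exists (v : gV g) (phi : gV D -> gV g) (psi : gE D -> gE g),
    injective phi /\ (forall u, phi u <> v) /\
    (forall u, u <> v -> exists u', phi u' = u) /\
    injective psi /\
    (forall e, (exists d, psi d = e) <-> (gsrc e <> v /\ gtgt e <> v)) /\
    forall d, gsrc (psi d) = phi (gsrc d) /\ gtgt (psi d) = phi (gtgt d).

Definition reverse_step (g D : graph) : Prop :=
  exists (e : gE g) (phi : gV g -> gV D) (psi : gE D -> gE g),
    bijective phi /\ bijective psi /\
    forall d,
      (psi d <> e -> phi (gsrc (psi d)) = gsrc d /\ phi (gtgt (psi d)) = gtgt d) /\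
      (psi d = e -> phi (gtgt (psi d)) = gsrc d /\ phi (gsrc (psi d)) = gtgt d).

Definition contract_step (g D : graph) : Prop :=
  exists (e : gE g) (phi : gV g -> gV D) (psi : gE D -> gE g),
    gsrc e <> gtgt e /\
    (forall u, exists x, phi x = u) /\
    (forall x y, phi x = phi y <->
       (x = y \/ (x = gsrc e /\ y = gtgt e) \/ (x = gtgt e /\ y = gsrc e))) /\
    injective psi /\
    (forall d, psi d <> e) /\ (forall e', e' <> e -> exists d, psi d = e') /\
    forall d, phi (gsrc (psi d)) = gsrc d /\ phi (gtgt (psi d)) = gtgt d.

Definition minor_step (g D : graph) : Prop :=
  iso_step g D \/ del_edge_step g D \/ del_vertex_step g D \/
  reverse_step g D \/ contract_step g D.

Inductive is_minor : graph -> graph -> Prop :=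
  | minor_refl g : is_minor g g
  | minor_step_trans g g' D : minor_step g g' -> is_minor D g' -> is_minor D g.

From Stdlib Require Import Relations.
From Stdlib Require List.
From mathcomp Require Import all_boot.

Set Implicit Arguments.
Unset Strict Implicit.
Unset Printing Implicit Defensive.

(* A loop can be deleted and a bridge contracted, giving in both cases a
   connected minor with fewer edges; by minimality it suffices to show that
   P(U) lifts from such a minor Δ back to Γ.  Colour the vertices of Γ by the
   side of the bridge b they lie on (one colour if b is a loop), so that only
   b can join the two colours.  Erasing b maps paths, U-equivalences and
   factorisations of Γ to those of Δ.  By induction on n: every edge of C_n of
   the projected arrow is the image of an edge of C_n(x), and C_n(x) contains
   b as soon as it contains an edge, or x ends, on the other side from ιx.
   Hence the walk in P_n(Δ) from the image of ιx to the image of τx lifts to a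
   walk in C_n(x), the missing edge b being available exactly when the walk
   has to change sides. *)

Lemma gmulVr (G : group) (x : G) : gmul x (ginv x) = gone G.
Proof.
have inv_inv : gmul (ginv (ginv x)) (ginv x) = gone G by apply: gmulV.
by rewrite -[gmul x _]gmul1 -{1}inv_inv -gmulA (gmulA (ginv x)) gmulV gmul1.
Qed.

Lemma gmulr1 (G : group) (x : G) : gmul x (gone G) = x.
Proof. by rewrite -(gmulV x) gmulA gmulVr gmul1. Qed.

Lemma ginv1 (G : group) : ginv (gone G) = gone G.
Proof. by rewrite -{1}(gmulr1 (ginv (gone G))) gmulV. Qed.

Lemma connect_map (T T' : finType) (r : rel T) (r' : rel T') (f : T -> T') :
  (forall x y, r x y -> connect r' (f x) (f y)) ->
  forall x y, connect r x y -> connect r' (f x) (f y).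
Proof.
move=> fr x y /connectP [p]; elim: p x => [|z p IHp] x /=; first by move=> _ ->.
by case/andP=> /fr rxz /IHp pzy /pzy; apply: connect_trans.
Qed.

Lemma connect_invariant (T : finType) (T' : Type) (r : rel T) (k : T -> T') :
  (forall x y, r x y -> k x = k y) -> forall x y, connect r x y -> k x = k y.
Proof.
move=> kr x y /connectP [p]; elim: p x => [|z p IHp] x /=; first by move=> _ ->.
by case/andP=> /kr -> /IHp.
Qed.

Lemma Cn_start (g : graph) U n (i : gV g) w j : (Cn U n i w j).1 i.
Proof.
elim: n i w j => [|n IHn] i w j /=; first by move=> w' _ _; left.
move=> [|x fs] [fs_nonnil [fs_chain _]] //.
case: fs_chain => x_src _; exists x; split; first by left.
by rewrite x_src; split; [apply: IHn | apply: rt_refl].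
Qed.

Lemma chain_is_path (g : graph) (s : gV g) fs t x :
  chain s fs t -> List.In x fs -> is_path x.1.1 x.1.2 x.2.
Proof.
elim: fs s => [|y fs IHfs] s //= [_ [y_path fs_chain]] [<-|x_in] //.
exact: IHfs fs_chain x_in.
Qed.

Section LiftAcrossEdge.

(* [D] is [g] with the edge [b] deleted, if [b] is a loop, or contracted, if
   [b] is a bridge; in the latter case [side] tells the two sides of [b]. *)
Variables (g D : graph) (U : variety) (b : gE g).
Variables (phi : gV g -> gV D) (psi : gE D -> gE g) (side : gV g -> bool).
Hypothesis psi_inj : injective psi.
Hypothesis psi_neq_b : forall d, psi d <> b.
Hypothesis psi_onto : forall e, e <> b -> exists d, psi d = e.
Hypothesis phi_src : forall d, phi (gsrc (psi d)) = gsrc d.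
Hypothesis phi_tgt : forall d, phi (gtgt (psi d)) = gtgt d.
Hypothesis phi_b : phi (gsrc b) = phi (gtgt b).
Hypothesis phi_fibre : forall x y, phi x = phi y ->
  x = y \/ (x = gsrc b /\ y = gtgt b) \/ (x = gtgt b /\ y = gsrc b).
Hypothesis side_edge : forall e, e <> b -> side (gsrc e) = side (gtgt e).
Hypothesis side_b : gsrc b <> gtgt b -> side (gsrc b) <> side (gtgt b).

Definition psi_preim (e : gE g) : option (gE D) := [pick d | psi d == e].

Lemma psi_preim_some e d : psi_preim e = Some d -> psi d = e.
Proof. by rewrite /psi_preim; case: pickP => // d' /eqP psi_d' [<-]. Qed.

Lemma psi_preimK d : psi_preim (psi d) = Some d.
Proof.
rewrite /psi_preim; case: pickP => [d' /eqP /psi_inj -> // | no_preim].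
by move: (no_preim d); rewrite eqxx.
Qed.

Lemma psi_preim_none e : psi_preim e = None -> e = b.
Proof.
case: (eqVneq e b) => // /eqP /psi_onto [d <-].
by rewrite psi_preimK.
Qed.

Fixpoint proj_word (w : word (gE g)) : word (gE D) :=
  if w is a :: w' then
    if psi_preim a.1 is Some d then (d, a.2) :: proj_word w' else proj_word w'
  else [::].

Definition proj_arrow (x : arrow g) : arrow D := (phi x.1.1, proj_word x.1.2, phi x.2).

Lemma proj_word_cat u v : proj_word (u ++ v) = proj_word u ++ proj_word v.
Proof. by elim: u => [|a u IHu] //=; case: (psi_preim a.1) => [d|] //=; rewrite IHu. Qed.

Lemma proj_word_flatten fs :
  flatten (map (fun x => x.1.2) (map proj_arrow fs)) =
  proj_word (flatten (map (fun x => x.1.2) fs)).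
Proof. by elim: fs => [|x fs IHfs] //=; rewrite proj_word_cat IHfs. Qed.

Lemma proj_word_path s u t : is_path s u t -> is_path (phi s) (proj_word u) (phi t).
Proof.
elim: u s => [|[e o] u IHu] s /=; first by move=> ->.
case=> <- /IHu; rewrite /lsrc /ltgt /=.
case preim_e: (psi_preim e) => [d|] /=.
  by rewrite -(psi_preim_some preim_e); case: o; rewrite ?phi_src ?phi_tgt.
by rewrite (psi_preim_none preim_e); case: o; rewrite ?phi_b.
Qed.

Lemma in_proj_word d o u : List.In (d, o) (proj_word u) -> List.In (psi d, o) u.
Proof.
elim: u => [|[e o'] u IHu] //=.
case preim_e: (psi_preim e) => [d'|] /=; last by move/IHu; right.
case=> [[<- <-]|/IHu]; last by right.
by left; rewrite (psi_preim_some preim_e).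
Qed.

Lemma wequiv_proj_word u v : wequiv U u v -> wequiv U (proj_word u) (proj_word v).
Proof.
move=> uv G G_U f.
pose f' e := if psi_preim e is Some d then f d else gone G.
have eval_proj w : geval f (proj_word w) = geval f' w.
  elim: w => [|[e o] w IHw] //=; rewrite /f' /=.
  by case: (psi_preim e) => [d|] /=; rewrite IHw // ?ginv1; case: o; rewrite gmul1.
by rewrite !eval_proj; apply: uv.
Qed.

Lemma chain_proj s fs t : chain s fs t -> chain (phi s) (map proj_arrow fs) (phi t).
Proof.
elim: fs s => [|x fs IHfs] s /=; first by move=> ->.
by case=> <- [/proj_word_path x_path /IHfs].
Qed.

Lemma factorisation_proj s w t fs : factorisation U s w t fs ->
  factorisation U (phi s) (proj_word w) (phi t) (map proj_arrow fs).
Proof.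
case=> fs_nonnil [fs_chain fs_w]; split; first by case: fs fs_nonnil {fs_chain fs_w}.
split; first exact: chain_proj.
by rewrite proj_word_flatten; apply: wequiv_proj_word.
Qed.

Lemma in_map_proj_arrow y fs :
  List.In y (map proj_arrow fs) -> exists2 x, List.In x fs & y = proj_arrow x.
Proof.
elim: fs => [|x fs IHfs] //= [<-|/IHfs [z z_in ->]]; first by exists x; first left.
by exists z; first right.
Qed.

Lemma letter_crossing_is_b (a : gE g * bool) : side (lsrc a) <> side (ltgt a) -> a.1 = b.
Proof.
case: a => e o; rewrite /lsrc /ltgt /=.
case: (eqVneq e b) => [//|/eqP /side_edge side_e].
by case: o => /=; rewrite side_e.
Qed.

Lemma step_crossing_uses_b (T : gE g -> Prop) x y :
  (exists e, T e /\ ((gsrc e = x /\ gtgt e = y) \/ (gsrc e = y /\ gtgt e = x))) ->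
  side x <> side y -> T b /\ reach T x (gsrc b).
Proof.
move=> [e [T_e xy]] side_xy.
case: (eqVneq e b) => [e_b|/eqP /side_edge side_e]; last first.
  by case: xy side_xy => [[<- <-]|[<- <-]]; rewrite side_e.
subst e; split=> //.
case: xy => [[<- _]|[_ <-]]; first exact: rt_refl.
by apply: rt_step; exists b; split=> //; right.
Qed.

Lemma reach_crossing_uses_b (T : gE g -> Prop) x y :
  reach T x y -> side x <> side y -> T b /\ reach T x (gsrc b).
Proof.
move/clos_rt_rt1n_iff; elim=> [//|x0 y0 z x0y0 _ IHr] side_x0z.
case: (eqVneq (side x0) (side y0)) => [same|/eqP]; last exact: step_crossing_uses_b.
rewrite same in side_x0z; have [T_b y0b] := IHr side_x0z.
by split=> //; apply: rt_trans y0b; apply: rt_step.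
Qed.

Lemma path_crossing_uses_b s u t :
  is_path s u t -> side s <> side t -> exists o, List.In (b, o) u.
Proof.
elim: u s => [|a u IHu] s /=; first by move=> ->.
case=> a_src u_path side_st.
case: (eqVneq (side (ltgt a)) (side s)) => [same|/eqP cross].
  have [|o b_in] := IHu _ u_path; first by rewrite same.
  by exists o; right.
have a_b : a.1 = b by apply: letter_crossing_is_b; rewrite a_src; apply/nesym.
by exists a.2; left; rewrite -a_b; case: a {a_src u_path cross a_b}.
Qed.

Lemma path_reaching_side_uses_b s u t e o :
  is_path s u t -> List.In (e, o) u -> side (gsrc e) <> side s ->
  exists o, List.In (b, o) u.
Proof.
elim: u s => [|a u IHu] s //=.
case=> a_src u_path [a_e|e_in] side_es.
  subst a; exists o; left; congr (_, _).
  case: (eqVneq e b) => [//|/eqP /side_edge side_e]; exfalso; apply: side_es.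
  by rewrite -a_src /lsrc /=; case: o {a_src u_path IHu}; rewrite /= ?side_e.
case: (eqVneq (side (ltgt a)) (side s)) => [same|/eqP cross].
  have [|o' b_in] := IHu _ u_path e_in; first by rewrite same.
  by exists o'; right.
have a_b : a.1 = b by apply: letter_crossing_is_b; rewrite a_src; apply/nesym.
by exists a.2; left; rewrite -a_b; case: a {a_src u_path cross a_b}.
Qed.

Lemma chain_crossing_arrow s fs t : chain s fs t ->
  (side t <> side s \/ exists2 x, List.In x fs & side x.1.1 <> side s) ->
  exists2 x, List.In x fs & side x.1.1 <> side x.2.
Proof.
elim: fs s => [|x fs IHfs] s /=; first by move=> -> [|[]].
case=> x_src [_ fs_chain] crossing.
case: (eqVneq (side x.2) (side s)) => [same|/eqP cross]; last first.
  by exists x; [left | rewrite x_src; apply/nesym].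
have [|y y_in y_cross] := IHfs _ fs_chain; last by exists y; first right.
rewrite same; case: crossing => [|[y [<-|y_in] y_cross]]; [by left | | by right; exists y].
by rewrite x_src in y_cross.
Qed.

Lemma reach_phi_fibre (T : gE g -> Prop) q v :
  phi v = phi q -> (side v <> side q -> T b) -> reach T q v.
Proof.
move=> /phi_fibre [->|[[-> ->]|[-> ->]]] b_needed; first exact: rt_refl.
- case: (eqVneq (gsrc b) (gtgt b)) => [->|/eqP b_nonloop]; first exact: rt_refl.
  by apply: rt_step; exists b; split; [apply/b_needed/side_b | right].
- case: (eqVneq (gsrc b) (gtgt b)) => [->|/eqP b_nonloop]; first exact: rt_refl.
  by apply: rt_step; exists b; split; [apply/b_needed/nesym/side_b | left].
Qed.

(* A walk of [D] lifts to a walk of [g] that uses [b] only where it has to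
   change sides. *)
Lemma reach_lift (S : gE D -> Prop) (T : gE g -> Prop) s :
  (forall d, S d -> T (psi d)) ->
  (forall d, S d -> side (gsrc (psi d)) <> side s -> T b) ->
  forall y, reach S (phi s) y -> forall v, phi v = y ->
  (side v <> side s -> T b) -> reach T s v.
Proof.
move=> ST S_cross y /clos_rt_rtn1_iff.
elim=> [|y0 z [d [S_d d_y0z]] _ IHr] v phi_v v_cross; first exact: reach_phi_fibre.
have [p [q [phi_p [phi_q [pq_d side_p]]]]] : exists p q, phi p = y0 /\ phi q = z /\
    ((p = gsrc (psi d) /\ q = gtgt (psi d)) \/ (p = gtgt (psi d) /\ q = gsrc (psi d)))
    /\ side p = side (gsrc (psi d)).
  case: d_y0z => [[<- <-]|[<- <-]].
    by exists (gsrc (psi d)), (gtgt (psi d)); rewrite phi_src phi_tgt; do 3!split=> //; left.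
  exists (gtgt (psi d)), (gsrc (psi d)); rewrite phi_src phi_tgt.
  by do 3!split=> //; [right | rewrite side_edge].
have side_q : side q = side p.
  by case: pq_d => [[-> ->]|[-> ->]]; rewrite side_edge.
have reach_p : reach T s p.
  by apply: IHr phi_p _ => cross; apply: (S_cross d S_d); rewrite -side_p.
have reach_q : reach T s q.
  apply: rt_trans reach_p _; apply: rt_step; exists (psi d); split; first exact: ST.
  by case: pq_d => [[-> ->]|[-> ->]]; [left | right].
apply: rt_trans reach_q _; apply: reach_phi_fibre => [|vq_cross]; first by rewrite phi_v phi_q.
case: (eqVneq (side v) (side s)) => [vs_same|/eqP]; last exact: v_cross.
by apply: (S_cross d S_d); rewrite -side_p -side_q -vs_same; apply/nesym.
Qed.

Definition Cn_edges_lift n := forall s u t d,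
  (Cn U n (phi s) (proj_word u) (phi t)).2 d -> (Cn U n s u t).2 (psi d).

Definition Cn_crossing_edge_has_b n := forall (s : gV g) u t e,
  (Cn U n s u t).2 e -> side (gsrc e) <> side s -> (Cn U n s u t).2 b.

Definition Cn_crossing_arrow_has_b n := forall (s : gV g) u t,
  side t <> side s -> (Cn U n s u t).2 b.

Definition Pn_contains_target n := forall (s : gV g) u t,
  is_path s u t -> (Pn U n s u t).1 t.

Lemma Pn_contains_target_lift n : propP D U ->
  Cn_edges_lift n -> Cn_crossing_edge_has_b n -> Cn_crossing_arrow_has_b n ->
  Pn_contains_target n.
Proof.
move=> PD edges_lift edge_b arrow_b s u t u_path.
have [_ reach_t] := PD _ _ _ (proj_word_path u_path) n.
split; first exact: Cn_start.
apply: (reach_lift _ _ reach_t (erefl (phi t))) => [d /edges_lift //|d /edges_lift|/arrow_b //].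
exact: edge_b.
Qed.

Lemma Cn_edges_lift0 : Cn_edges_lift 0.
Proof.
move=> s u t d /= C0_d u' u'_path u'_u.
have [o d_in] := C0_d _ (proj_word_path u'_path) (wequiv_proj_word u'_u).
by exists o; apply: in_proj_word.
Qed.

Lemma Cn_crossing_edge_has_b0 : Cn_crossing_edge_has_b 0.
Proof.
move=> s u t e /= C0_e e_cross u' u'_path u'_u.
have [o e_in] := C0_e _ u'_path u'_u.
exact: path_reaching_side_uses_b u'_path e_in e_cross.
Qed.

Lemma Cn_crossing_arrow_has_b0 : Cn_crossing_arrow_has_b 0.
Proof.
move=> s u t st_cross u' u'_path _.
exact: path_crossing_uses_b u'_path (nesym st_cross).
Qed.

Lemma Cn_edges_liftS n :
  Cn_edges_lift n -> Cn_crossing_edge_has_b n -> Cn_edges_lift n.+1.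
Proof.
move=> edges_lift edge_b s u t d /= Cn1_d fs fs_fact.
have [y [y_in [Cn_d [_ reach_d]]]] := Cn1_d _ (factorisation_proj fs_fact).
have [x x_in y_x] := in_map_proj_arrow y_in; subst y.
exists x; split=> //; split; first exact: edges_lift.
split; first exact: Cn_start.
apply: (reach_lift _ _ reach_d (phi_src d)).
- by move=> d' /edges_lift.
- by move=> d' /edges_lift; apply: edge_b.
- by move/(edge_b _ _ _ _ (edges_lift _ _ _ _ Cn_d)).
Qed.

Lemma factorisation_crossing_has_b n s fs t :
  Pn_contains_target n -> chain s fs t ->
  (side t <> side s \/ exists2 x, List.In x fs & side x.1.1 <> side s) ->
  exists x, List.In x fs /\ (component (Cn U n x.1.1 x.1.2 x.2) x.1.1).2 b.
Proof.
move=> target fs_chain crossing.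
have [z z_in z_cross] := chain_crossing_arrow fs_chain crossing.
have [z_start reach_z] := target _ _ _ (chain_is_path fs_chain z_in).
have [z_b reach_b] := reach_crossing_uses_b reach_z z_cross.
by exists z.
Qed.

Lemma Cn_crossing_edge_has_bS n :
  Pn_contains_target n -> Cn_crossing_edge_has_b n.+1.
Proof.
move=> target s u t e /= Cn1_e e_cross fs fs_fact.
have [x [x_in [Cn_e [x_start reach_e]]]] := Cn1_e _ fs_fact.
case: (eqVneq (side x.1.1) (side (gsrc e))) => [same|/eqP cross].
  case: fs_fact => [_ [fs_chain _]].
  by apply: (factorisation_crossing_has_b target fs_chain); right; exists x; rewrite ?same.
have [x_b reach_b] := reach_crossing_uses_b reach_e cross.
by exists x.
Qed.

Lemma Cn_crossing_arrow_has_bS n :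
  Pn_contains_target n -> Cn_crossing_arrow_has_b n.+1.
Proof.
move=> target s u t st_cross fs [_ [fs_chain _]].
by apply: (factorisation_crossing_has_b target fs_chain); left.
Qed.

Lemma propP_lift : propP D U -> propP g U.
Proof.
move=> PD i j w w_path n.
suff [edges_lift [edge_b arrow_b]] :
    Cn_edges_lift n /\ Cn_crossing_edge_has_b n /\ Cn_crossing_arrow_has_b n.
  exact: Pn_contains_target_lift.
elim: n => [|n [edges_lift [edge_b arrow_b]]].
  by split; [|split]; [apply: Cn_edges_lift0 | apply: Cn_crossing_edge_has_b0 |
                       apply: Cn_crossing_arrow_has_b0].
have target := Pn_contains_target_lift PD edges_lift edge_b arrow_b.
split; first exact: Cn_edges_liftS.
by split; [apply: Cn_crossing_edge_has_bS | apply: Cn_crossing_arrow_has_bS].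
Qed.

End LiftAcrossEdge.

Lemma minor_step_card_edges (g D : graph) : minor_step g D -> #|gE D| <= #|gE g|.
Proof.
case=> [[phi [psi [_ [/bij_inj psi_inj _]]]] |
        [[e [phi [psi [_ [psi_inj _]]]]] |
        [[v [phi [psi [_ [_ [_ [psi_inj _]]]]]]] |
        [[e [phi [psi [_ [/bij_inj psi_inj _]]]]] |
         [e [phi [psi [_ [_ [_ [psi_inj _]]]]]]]]]]];
  exact: leq_card psi_inj.
Qed.

Lemma minor_card_edges (D g : graph) : is_minor D g -> #|gE D| <= #|gE g|.
Proof.
elim=> // g0 g1 D0 /minor_step_card_edges g1_g0 _ D0_g1.
exact: leq_trans D0_g1 g1_g0.
Qed.

Lemma card_sig_neq (T : finType) (x : T) : #|{: {y : T | y != x}}| < #|T|.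
Proof.
rewrite card_sig (eq_card (B := predC1 x)) // cardC1 ltn_predL.
by apply/card_gt0P; exists x.
Qed.

Section DeleteEdge.
Variables (g : graph) (b : gE g).

Definition delete_edge : graph :=
  @Graph (gV g) {e : gE g | e != b} (fun e => gsrc (val e)) (fun e => gtgt (val e)).

Lemma delete_edge_minor : is_minor delete_edge g.
Proof.
apply: (minor_step_trans (g' := delete_edge)); last exact: minor_refl.
right; left; exists b, id, val; split; first by exists id.
split; first exact: val_inj.
split; first by move=> d /eqP; rewrite (negbTE (valP d)).
by split=> // e /eqP e_b; exists (Sub e e_b).
Qed.

Hypothesis b_loop : gsrc b = gtgt b.

Lemma delete_loop_connected : connected g -> connected delete_edge.
Proof.
case=> V_gt0 g_conn; split=> // x y.
apply: (@connect_map _ _ _ _ id) (g_conn x y) => x' y' /existsP [e /andP [_ e_x'y']].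
case: (eqVneq e b) => [e_b|e_b].
  by rewrite e_b b_loop in e_x'y'; case/orP: e_x'y' => /andP [/eqP <- /eqP <-].
by apply: connect1; apply/existsP; exists (Sub e e_b).
Qed.

Lemma delete_loop_propP U : propP delete_edge U -> propP g U.
Proof.
apply: (@propP_lift g delete_edge U b id val (fun _ => true)) => //.
- exact: val_inj.
- by move=> d /eqP; rewrite (negbTE (valP d)).
- by move=> e /eqP e_b; exists (Sub e e_b).
- by move=> x y ->; left.
Qed.

End DeleteEdge.

Section ContractEdge.
Variables (g : graph) (b : gE g).
Hypothesis b_nonloop : gsrc b != gtgt b.

Definition contract_vertex (x : gV g) : {v : gV g | v != gtgt b} :=
  insubd (exist _ (gsrc b) b_nonloop) x.

Definition contract_edge : graph :=
  @Graph {v : gV g | v != gtgt b} {e : gE g | e != b}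
    (fun e => contract_vertex (gsrc (val e))) (fun e => contract_vertex (gtgt (val e))).

Lemma val_contract_vertex x :
  val (contract_vertex x) = if x == gtgt b then gsrc b else x.
Proof. by rewrite /contract_vertex val_insubd; case: (x == gtgt b). Qed.

Lemma contract_vertexK (u : gV contract_edge) : contract_vertex (val u) = u.
Proof. by apply: val_inj; rewrite val_contract_vertex (negbTE (valP u)). Qed.

Lemma contract_vertex_eq x y : contract_vertex x = contract_vertex y <->
  x = y \/ (x = gsrc b /\ y = gtgt b) \/ (x = gtgt b /\ y = gsrc b).
Proof.
split.
  move/(congr1 val); rewrite !val_contract_vertex.
  case: (eqVneq x (gtgt b)) => [->|_]; case: (eqVneq y (gtgt b)) => [->|_] /=.
  - by left.
  - by move=> <-; right; right.
  - by move=> ->; right; left.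
  - by left.
case=> [->|[[-> ->]|[-> ->]]] //;
  by apply: val_inj; rewrite !val_contract_vertex eqxx (negbTE b_nonloop).
Qed.

Lemma contract_edge_minor : is_minor contract_edge g.
Proof.
apply: (minor_step_trans (g' := contract_edge)); last exact: minor_refl.
do 4!right; exists b, contract_vertex, val.
split; first exact/eqP.
split; first by move=> u; exists (val u); apply: contract_vertexK.
split; first exact: contract_vertex_eq.
split; first exact: val_inj.
split; first by move=> d /eqP; rewrite (negbTE (valP d)).
by split=> // e /eqP e_b; exists (Sub e e_b).
Qed.

Lemma contract_edge_connected : connected g -> connected contract_edge.
Proof.
case=> _ g_conn; split; first by apply/card_gt0P; exists (contract_vertex (gsrc b)).
move=> x y; rewrite -(contract_vertexK x) -(contract_vertexK y).
apply: (connect_map (f := contract_vertex)) (g_conn _ _) => x' y' /existsP [e /andP [_ e_x'y']].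
case: (eqVneq e b) => [e_b|e_b].
  suff -> : contract_vertex x' = contract_vertex y' by [].
  by apply/contract_vertex_eq; rewrite e_b in e_x'y'; case/orP: e_x'y' => /andP [/eqP <- /eqP <-]; auto.
apply: connect1; apply/existsP; exists (Sub e e_b).
by case/orP: e_x'y' => /andP [/eqP <- /eqP <-]; rewrite !eqxx ?orbT.
Qed.

Variables (x0 y0 : gV g).
Hypothesis b_bridge : ~~ connect (adj_in (predC1 b)) x0 y0.

Definition bridge_side (v : gV g) : bool := connect (adj_in (predC1 b)) x0 v.

Lemma bridge_side_edge e : e <> b -> bridge_side (gsrc e) = bridge_side (gtgt e).
Proof.
move=> /eqP e_b; rewrite /bridge_side.
have adj_st : adj_in (predC1 b) (gsrc e) (gtgt e).
  by apply/existsP; exists e; rewrite /= e_b !eqxx.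
have adj_ts : adj_in (predC1 b) (gtgt e) (gsrc e).
  by apply/existsP; exists e; rewrite /= e_b !eqxx orbT.
by apply/idP/idP => /connect_trans; [apply; apply: connect1 | apply; apply: connect1].
Qed.

Lemma bridge_side_b : connected g -> bridge_side (gsrc b) <> bridge_side (gtgt b).
Proof.
case=> _ g_conn side_b.
have same_side : bridge_side x0 = bridge_side y0.
  apply: (connect_invariant _ (g_conn x0 y0)) => x y /existsP [e /andP [_ e_xy]].
  case: (eqVneq e b) => [->|/eqP /bridge_side_edge side_e] in e_xy *;
    by case/orP: e_xy => /andP [/eqP <- /eqP <-]; rewrite ?side_b ?side_e.
by move: b_bridge; rewrite -[connect _ x0 y0]/(bridge_side y0) -same_side /bridge_side connect0.
Qed.

Lemma contract_bridge_propP U : connected g -> propP contract_edge U -> propP g U.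
Proof.
move=> g_conn.
apply: (@propP_lift g contract_edge U b contract_vertex val bridge_side) => //.
- exact: val_inj.
- by move=> d /eqP; rewrite (negbTE (valP d)).
- by move=> e /eqP e_b; exists (Sub e e_b).
- by apply/contract_vertex_eq; auto.
- by move=> x y /contract_vertex_eq.
- exact: bridge_side_edge.
- by move=> _; apply: bridge_side_b.
Qed.

End ContractEdge.

Theorem proposition3p3 (U : variety) (g : graph) :
  connected g ->
  ~ propP g U ->
  (forall D : graph, connected D -> is_minor D g -> ~ propP D U -> is_minor g D) ->
  two_edge_connected g /\ loopless g.
Proof.
move=> g_conn g_notP g_minimal.
have no_smaller_lift D : connected D -> is_minor D g -> #|gE D| < #|gE g| ->
    ~ (propP D U -> propP g U).
  move=> D_conn D_minor D_smaller D_lift.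
  have := minor_card_edges (g_minimal D D_conn D_minor (fun PD => g_notP (D_lift PD))).
  by rewrite leqNgt D_smaller.
have g_loopless : loopless g.
  move=> b b_loop; apply: (no_smaller_lift (delete_edge b)).
  - exact: delete_loop_connected.
  - exact: delete_edge_minor.
  - exact: card_sig_neq.
  - exact: delete_loop_propP.
split=> //; split=> // b x y.
case b_bridge: (connect (adj_in (predC1 b)) x y) => //; exfalso.
have b_nonloop : gsrc b != gtgt b by apply/eqP; apply: g_loopless.
apply: (no_smaller_lift (contract_edge b_nonloop)).
- exact: contract_edge_connected.
- exact: contract_edge_minor.
- exact: card_sig_neq.
- by apply: (contract_bridge_propP (x0 := x) (y0 := y)); rewrite ?b_bridge.
Qed.
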